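(* Let $T$ be a commutative monad on a cartesian monoidal category $\mathbb{C}$ and $X$ an object. The family of Kleisli morphisms $(\mathsf{samp}_n:TX\rightsquigarrow X^{\otimes n})_{n\in\mathbb{N}}$ is jointly monic in $\mathsf{Kl}(T)$ if and only if the family of morphisms $\mu_{X^n}\circ T(\nabla_n)\circ T(\Delta_n):TTX\to T(X^n)$, $n\in\mathbb{N}$, is jointly monic in $\mathbb{C}$.
   Context: $T=(T,\eta,\mu)$ with monoidal structure $\nabla_{A,B}:TA\times TB\to T(A\times B)$; $\nabla_n:(TX)^n\to T(X^n)$ is the iterated monoidal structure (with $\nabla_0=\eta_1$, $\nabla_1=1$) and $\Delta_n:TX\to(TX)^n$ the $n$-fold diagonal. $\mathsf{Kl}(T)$: morphisms $f:A\rightsquigarrow B$ correspond to $f^\sharp:A\to TB$, composition $(g\circledcirc f)^\sharp=\mu\circ T(g^\sharp)\circ f^\sharp$, tensor $\otimes$ is $\times$ on objects with $(f\otimes g)^\sharp=\nabla\circ(f^\sharp\times g^\sharp)$. $\mathsf{force}_A:TA\rightsquigarrow A$ has $\mathsf{force}_A^\sharp=1_{TA}$; $\mathsf{copy}_n:TX\rightsquigarrow(TX)^{\otimes n}$ has $\mathsf{copy}_n^\sharp=\eta\circ\Delta_n$; $\mathsf{samp}_n=\mathsf{force}^{\otimes n}\circledcirc\mathsf{copy}_n$. A family of morphisms with common domain is jointly monic if any two morphisms into that domain which agree after composition with every member of the family are equal. *)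

Record Cat := {
  ob :> Type;
  hom : ob -> ob -> Type;
  idm : forall A, hom A A;
  comp : forall A B C, hom B C -> hom A B -> hom A C;
  comp_id_l : forall A B (f : hom A B), comp A B B (idm B) f = f;
  comp_id_r : forall A B (f : hom A B), comp A A B f (idm A) = f;
  comp_assoc : forall A B C D (h : hom C D) (g : hom B C) (f : hom A B),
      comp A C D h (comp A B C g f) = comp A B D (comp B C D h g) f
}.
Arguments hom {c} _ _.
Arguments idm {c} _.
Arguments comp {c A B C} _ _.

Definition jointly_monic {O : Type} {H : O -> O -> Type}
  (cmp : forall A B C, H B C -> H A B -> H A C)
  (D : O) (I : Type) (B : I -> O) (f : forall i, H D (B i)) : Prop :=
  forall (A : O) (g h : H A D),
    (forall i, cmp A D (B i) (f i) g = cmp A D (B i) (f i) h) -> g = h.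

Record Cartesian (C : Cat) := {
  one : C;
  bang : forall A : C, hom A one;
  bang_uniq : forall (A : C) (f : hom A one), f = bang A;
  prod : C -> C -> C;
  p1 : forall A B : C, hom (prod A B) A;
  p2 : forall A B : C, hom (prod A B) B;
  pair : forall (Z A B : C), hom Z A -> hom Z B -> hom Z (prod A B);
  pair_p1 : forall Z A B (f : hom Z A) (g : hom Z B), comp (p1 A B) (pair Z A B f g) = f;
  pair_p2 : forall Z A B (f : hom Z A) (g : hom Z B), comp (p2 A B) (pair Z A B f g) = g;
  pair_uniq : forall Z A B (f : hom Z A) (g : hom Z B) (h : hom Z (prod A B)),
      comp (p1 A B) h = f -> comp (p2 A B) h = g -> h = pair Z A B f g
}.
Arguments one {C} _.
Arguments bang {C} _ _.
Arguments prod {C} _ _ _.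
Arguments p1 {C} _ _ _.
Arguments p2 {C} _ _ _.
Arguments pair {C} _ {Z A B} _ _.

Section CartOps.
Context {C : Cat} (P : Cartesian C).
Definition pmap {A A' B B' : C} (f : hom A B) (g : hom A' B') :
  hom (prod P A A') (prod P B B') :=
  pair P (comp f (p1 P A A')) (comp g (p2 P A A')).
Definition pswap (A B : C) : hom (prod P A B) (prod P B A) :=
  pair P (p2 P A B) (p1 P A B).
Definition passoc (A B D : C) : hom (prod P (prod P A B) D) (prod P A (prod P B D)) :=
  pair P (comp (p1 P A B) (p1 P (prod P A B) D))
         (pair P (comp (p2 P A B) (p1 P (prod P A B) D)) (p2 P (prod P A B) D)).
(* n-fold power: X^0 = 1, X^1 = X, X^(n+2) = X^(n+1) x X *)
Fixpoint pow1 (X : C) (m : nat) : C :=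
  match m with O => X | S k => prod P (pow1 X k) X end.
Definition pow (X : C) (n : nat) : C :=
  match n with O => one P | S m => pow1 X m end.
Fixpoint diag1 (X : C) (m : nat) : hom X (pow1 X m) :=
  match m with O => idm X | S k => pair P (diag1 X k) (idm X) end.
Definition diag (X : C) (n : nat) : hom X (pow X n) :=
  match n with O => bang P X | S m => diag1 X m end.
End CartOps.

Record Monad (C : Cat) := {
  T : C -> C;
  Tm : forall A B : C, hom A B -> hom (T A) (T B);
  Tm_id : forall A : C, Tm A A (idm A) = idm (T A);
  Tm_comp : forall A B D (g : hom B D) (f : hom A B),
      Tm A D (comp g f) = comp (Tm B D g) (Tm A B f);
  eta : forall A : C, hom A (T A);
  mu : forall A : C, hom (T (T A)) (T A);
  eta_nat : forall A B (f : hom A B), comp (Tm A B f) (eta A) = comp (eta B) f;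
  mu_nat : forall A B (f : hom A B),
      comp (Tm A B f) (mu A) = comp (mu B) (Tm (T A) (T B) (Tm A B f));
  mu_eta_l : forall A : C, comp (mu A) (eta (T A)) = idm (T A);
  mu_eta_r : forall A : C, comp (mu A) (Tm A (T A) (eta A)) = idm (T A);
  mu_assoc : forall A : C, comp (mu A) (Tm (T (T A)) (T A) (mu A)) = comp (mu A) (mu (T A))
}.
Arguments T {C} _ _.
Arguments Tm {C} _ {A B} _.
Arguments eta {C} _ _.
Arguments mu {C} _ _.

Record Strength {C : Cat} (P : Cartesian C) (M : Monad C) := {
  st : forall A B : C, hom (prod P A (T M B)) (T M (prod P A B));
  st_nat : forall A A' B B' (f : hom A A') (g : hom B B'),
      comp (st A' B') (pmap P f (Tm M g)) = comp (Tm M (pmap P f g)) (st A B);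
  st_unit : forall B : C,
      comp (Tm M (p2 P (one P) B)) (st (one P) B) = p2 P (one P) (T M B);
  st_assoc : forall A B D : C,
      comp (Tm M (passoc P A B D)) (st (prod P A B) D)
      = comp (st A (prod P B D)) (comp (pmap P (idm A) (st B D)) (passoc P A B (T M D)));
  st_eta : forall A B : C,
      comp (st A B) (pmap P (idm A) (eta M B)) = eta M (prod P A B);
  st_mu : forall A B : C,
      comp (st A B) (pmap P (idm A) (mu M B))
      = comp (mu M (prod P A B)) (comp (Tm M (st A B)) (st A (T M B)))
}.
Arguments st {C P M} _ _ _.

Section StrongOps.
Context {C : Cat} {P : Cartesian C} {M : Monad C} (St : Strength P M).
Definition cost (A B : C) : hom (prod P (T M A) B) (T M (prod P A B)) :=
  comp (Tm M (pswap P B A)) (comp (st St B A) (pswap P (T M A) B)).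
Definition dstr_l (A B : C) : hom (prod P (T M A) (T M B)) (T M (prod P A B)) :=
  comp (mu M _) (comp (Tm M (cost A B)) (st St (T M A) B)).
Definition dstr_r (A B : C) : hom (prod P (T M A) (T M B)) (T M (prod P A B)) :=
  comp (mu M _) (comp (Tm M (st St A B)) (cost A (T M B))).
End StrongOps.

Definition commutative {C : Cat} {P : Cartesian C} {M : Monad C} (St : Strength P M) : Prop :=
  forall A B : C, dstr_l St A B = dstr_r St A B.

Section Kleisli.
Context {C : Cat} {P : Cartesian C} {M : Monad C} (St : Strength P M).
Definition nabla (A B : C) := dstr_l St A B.
Fixpoint nabla1 (X : C) (m : nat) : hom (pow1 P (T M X) m) (T M (pow1 P X m)) :=
  match m with
  | O => idm (T M X)
  | S k => comp (nabla (pow1 P X k) X) (pmap P (nabla1 X k) (idm (T M X)))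
  end.
Definition nablan (X : C) (n : nat) : hom (pow P (T M X) n) (T M (pow P X n)) :=
  match n with O => eta M (one P) | S m => nabla1 X m end.

(* Kleisli category Kl(T): a morphism f : A ~> B is represented by f# : A -> TB *)
Definition khom (A B : C) : Type := hom A (T M B).
Definition kid (A : C) : khom A A := eta M A.
Definition kcomp (A B D : C) (g : khom B D) (f : khom A B) : khom A D :=
  comp (mu M D) (comp (Tm M g) f).
Definition ktensor {A A' B B' : C} (f : khom A B) (g : khom A' B') :
  khom (prod P A A') (prod P B B') :=
  comp (nabla B B') (pmap P f g).
Fixpoint ktpow1 {A B : C} (f : khom A B) (m : nat) : khom (pow1 P A m) (pow1 P B m) :=
  match m with O => f | S k => ktensor (ktpow1 f k) f end.
Definition ktpow {A B : C} (f : khom A B) (n : nat) : khom (pow P A n) (pow P B n) :=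
  match n with O => kid (one P) | S m => ktpow1 f m end.

Definition force (A : C) : khom (T M A) A := idm (T M A).
Definition copy (X : C) (n : nat) : khom (T M X) (pow P (T M X) n) :=
  comp (eta M _) (diag P (T M X) n).
Definition samp (X : C) (n : nat) : khom (T M X) (pow P X n) :=
  kcomp _ _ _ (ktpow (force X) n) (copy X n).
End Kleisli.

(* A Kleisli morphism [g : A ~> TX] is a morphism [A -> TTX] of the base
   category, and post-composing it in Kl(T) with [f : TX ~> B] is ordinary
   composition with [mu o T f# : TTX -> TB].  Joint monicity of a family in
   Kl(T) with domain [TX] is therefore the same as joint monicity of the
   family [mu o T f_i#] in the base category.  For [samp_n] one has
   [samp_n# = nabla_n o Delta_n], since [force^{(x) n}] is [nabla_n] and
   [copy_n] is pure. *)


Lemma jointly_monic_ext {O : Type} {H : O -> O -> Type}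
  (cmp : forall A B C, H B C -> H A B -> H A C)
  (D : O) (I : Type) (B : I -> O) (f f' : forall i, H D (B i)) :
  (forall i, f i = f' i) ->
  jointly_monic cmp D I B f <-> jointly_monic cmp D I B f'.
Proof.
  intros Ef; unfold jointly_monic.
  split; intros Hmono A g h E; apply Hmono; intro i.
  - rewrite !Ef; apply E.
  - rewrite <- !Ef; apply E.
Qed.

Section KleisliMonic.
Context {C : Cat} {M : Monad C}.

Lemma kcompE (A B D : C) (g : khom B D) (f : khom A B) :
  kcomp A B D g f = comp (comp (mu M D) (Tm M g)) f.
Proof. apply comp_assoc. Qed.

Lemma kcomp_pure (A B D : C) (g : khom B D) (h : hom A B) :
  kcomp A B D g (comp (eta M B) h) = comp g h.
Proof.
  unfold kcomp.
  rewrite (comp_assoc C _ _ _ _ (Tm M g) (eta M B) h), eta_nat.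
  rewrite <- comp_assoc, comp_assoc, mu_eta_l.
  apply comp_id_l.
Qed.

Lemma jointly_monic_kleisli (D : C) (I : Type) (B : I -> C)
  (f : forall i, khom D (B i)) :
  jointly_monic (@kcomp C M) D I B f
  <->
  jointly_monic (fun A B D (g : hom B D) (f : hom A B) => comp g f)
    (T M D) I (fun i => T M (B i)) (fun i => comp (mu M (B i)) (Tm M (f i))).
Proof.
  unfold jointly_monic.
  split; intros Hmono A g h E; apply Hmono; intro i.
  - rewrite !kcompE; apply E.
  - rewrite <- !kcompE; apply E.
Qed.

End KleisliMonic.

Section Sampling.
Context {C : Cat} {P : Cartesian C} {M : Monad C} (S : Strength P M).

Lemma ktpow_force (X : C) (n : nat) : ktpow S (force X) n = nablan S X n.
Proof.
  destruct n as [|m]; [reflexivity|]; simpl.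
  induction m as [|k IH]; [reflexivity|]; simpl.
  unfold ktensor; rewrite IH; reflexivity.
Qed.

Lemma samp_nablan_diag (X : C) (n : nat) :
  samp S X n = comp (nablan S X n) (diag P (T M X) n).
Proof. unfold samp, copy; rewrite ktpow_force; apply kcomp_pure. Qed.

End Sampling.

Theorem proposition6p3 (C : Cat) (P : Cartesian C) (M : Monad C)
  (S : Strength P M) (Hcomm : commutative S) (X : C) :
  jointly_monic (@kcomp C M) (T M X) nat (fun n => pow P X n) (samp S X)
  <->
  jointly_monic (fun A B D (g : hom B D) (f : hom A B) => comp g f)
    (T M (T M X)) nat (fun n => T M (pow P X n))
    (fun n => comp (mu M (pow P X n))
                 (comp (Tm M (nablan S X n)) (Tm M (diag P (T M X) n)))).
Proof.
  eapply iff_trans; [apply jointly_monic_kleisli|].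
  apply jointly_monic_ext; intro n.
  rewrite samp_nablan_diag, Tm_comp; reflexivity.
Qed.
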